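(* Let $M$ be a matroid flock on a finite set $E$, let $\alpha,\beta\in\mathbb{Z}^E$ and let $I\subseteq E$. If $I\cap\mathrm{supp}(\beta-\alpha)=\emptyset$ and $\alpha\le\beta$ (coordinatewise), then $r_\alpha(I)\ge r_\beta(I)$.
   Context: $\mathrm{supp}(x):=\{i:x_i\neq0\}$. $e_i$ unit vectors, $\mathbf{1}$ the all-one vector in $\mathbb{Z}^E$. A matroid flock of rank $d$ on $E$ is a map $M$ assigning to each $\alpha\in\mathbb{Z}^E$ a matroid $M_\alpha$ on $E$ of rank $d$ with (MF1) $M_\alpha/i=M_{\alpha+e_i}\setminus i$ for all $\alpha$, $i\in E$ (contraction, deletion); and (MF2) $M_\alpha=M_{\alpha+\mathbf{1}}$ for all $\alpha$. $r_\alpha$ denotes the rank function of $M_\alpha$. *)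

From mathcomp Require Import all_boot all_order all_algebra.
Set Implicit Arguments. Unset Strict Implicit. Unset Printing Implicit Defensive.
Import Order.TTheory GRing.Theory Num.Theory.
Local Open Scope ring_scope.

Definition is_matroid_rank (E : finType) (r : {set E} -> nat) : Prop :=
  [/\ (forall A : {set E}, (r A <= #|A|)%N),
      (forall A B : {set E}, A \subset B -> (r A <= r B)%N) &
      (forall A B : {set E}, (r (A :|: B) + r (A :&: B) <= r A + r B)%N)].

(* rank function of the contraction M / i, on subsets of E \ i *)
Definition contract_rank (E : finType) (r : {set E} -> nat) (i : E)
  (A : {set E}) : nat := (r (A :|: [set i]) - r [set i])%N.

(* rank function of the deletion M \ i, on subsets of E \ i *)
Definition delete_rank (E : finType) (r : {set E} -> nat) (i : E)
  (A : {set E}) : nat := r A.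

Definition unitv (E : finType) (i : E) : E -> int := fun j => (j == i)%:Z.
Definition addv (E : finType) (a b : E -> int) : E -> int := fun j => a j + b j.
Definition onev (E : finType) : E -> int := fun _ => 1.

Definition supp (E : finType) (x : E -> int) : {set E} := [set i | x i != 0].

Definition matroid_flock (E : finType) (d : nat)
  (M : (E -> int) -> {set E} -> nat) : Prop :=
  [/\ (forall alpha, is_matroid_rank (M alpha) /\ M alpha setT = d),
      (forall alpha (i : E) (A : {set E}), A \subset ~: [set i] ->
         contract_rank (M alpha) i A = delete_rank (M (addv alpha (unitv i))) i A) &
      (forall alpha (A : {set E}), M alpha A = M (addv alpha (@onev E)) A)].

From Pilot Require Import Defs.
From mathcomp Require Import all_boot all_order all_algebra.
From mathcomp Require Import zify.
From Stdlib Require Import FunctionalExtensionality.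

Set Implicit Arguments.
Unset Strict Implicit.
Unset Printing Implicit Defensive.
Import Order.TTheory GRing.Theory Num.Theory.
Local Open Scope ring_scope.

(* By (MF1) the rank of I (with i outside I) at alpha + e_i is its rank in the
   contraction M_alpha / i, and contracting an element never raises ranks.
   Raising alpha one coordinate at a time outside I from alpha to beta gives
   the theorem. *)

Lemma contract_rank_le (E : finType) (r : {set E} -> nat) (i : E) (A : {set E}) :
  is_matroid_rank r -> i \notin A -> (contract_rank r i A <= r A)%N.
Proof.
case=> _ _ submod iA; rewrite /contract_rank leq_subLR.
have disjoint_Ai : A :&: [set i] = set0.
  by apply/setP => x; rewrite !inE; apply: contraNF iA => /andP[xA /eqP <-].
by have := submod A [set i]; rewrite disjoint_Ai addnC; lia.
Qed.

Section MatroidFlock.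

Variables (E : finType) (d : nat) (M : (E -> int) -> {set E} -> nat).
Hypothesis HM : matroid_flock d M.

Lemma flock_rank_addv_unit (alpha : E -> int) (i : E) (I : {set E}) :
  i \notin I -> (M (Defs.addv alpha (unitv i)) I <= M alpha I)%N.
Proof.
case: HM => rank_M MF1 _ iI.
have sub_I : I \subset ~: [set i].
  by apply/subsetP => x xI; rewrite !inE; apply: contraNneq iI => <-.
rewrite -[M _ I]/(delete_rank (M _) i I) -MF1 //.
exact: contract_rank_le (rank_M alpha).1 iI.
Qed.

Lemma dist_addv_unit (alpha beta : E -> int) (i : E) : alpha i < beta i ->
  ((\sum_j `|beta j - Defs.addv alpha (unitv i) j|).+1 = \sum_j `|beta j - alpha j|)%N.
Proof.
move=> lt_i; rewrite (bigD1 i) //= [RHS](bigD1 i) //=.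
under eq_bigr => j ji do rewrite /Defs.addv /unitv (negbTE ji) addr0.
by rewrite /Defs.addv /unitv eqxx; lia.
Qed.

Lemma flock_rank_le_of_agree_on (alpha beta : E -> int) (I : {set E}) :
  (forall j, alpha j <= beta j) -> {in I, forall j, alpha j = beta j} ->
  (M beta I <= M alpha I)%N.
Proof.
move Hn: (\sum_j `|beta j - alpha j|)%N => n.
elim: n alpha Hn => [|n IH] alpha Hn le_ab eq_I.
  suff -> : beta = alpha by [].
  apply: functional_extensionality => j; apply/eqP; rewrite -subr_eq0 -absz_eq0.
  by move/eqP: Hn; rewrite sum_nat_eq0 => /forallP/(_ j).
have [i lt_i] : exists i, alpha i < beta i.
  apply/existsP; apply: contra_eqT Hn; rewrite negb_exists => /forallP not_lt.
  by rewrite big1 // => j _; apply/eqP; rewrite absz_eq0 subr_eq0 eq_le le_ab leNgt not_lt.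
have iI : i \notin I by apply: contraTN lt_i => /eq_I ->; rewrite ltxx.
apply: leq_trans _ (flock_rank_addv_unit alpha iI); apply: IH.
- by apply/eqP; rewrite -eqSS (dist_addv_unit lt_i) Hn.
- move=> j; rewrite /Defs.addv /unitv; case: eqP => [->|_]; last by rewrite addr0.
  by move: lt_i; lia.
- move=> j jI; have ji : j != i by apply: contraNneq iI => <-.
  by rewrite /Defs.addv /unitv (negbTE ji) addr0 eq_I.
Qed.

End MatroidFlock.

Theorem mainTheorem10 (E : finType) (d : nat) (M : (E -> int) -> {set E} -> nat)
  (HM : matroid_flock d M) (alpha beta : E -> int) (I : {set E}) :
  I :&: supp (fun j => beta j - alpha j) = set0 ->
  (forall j, alpha j <= beta j) ->
  (M beta I <= M alpha I)%N.
Proof.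
move=> disj le_ab; apply: (flock_rank_le_of_agree_on HM le_ab).
move=> j jI; apply/eqP; rewrite eq_sym -subr_eq0.
by have /setP/(_ j) := disj; rewrite !inE jI /= => /negbFE.
Qed.
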